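(* Let $(X,\mathcal{F},\mu)$ be a probability space with $L^2(X,\mu)$ infinite dimensional, and let $P$ be a reversible Markov operator on $L^2(X,\mu)$. Then for every $k\geq1$, \[ h_P(k)+\overline{h}_P(k)\leq1. \]
   Context: A Markov operator is a linear operator $P:L^2(X,\mu)\to L^2(X,\mu)$ with $P1=1$ and $Pf\geq0$ whenever $f\geq0$; it is reversible if $\int_XgPf\,d\mu=\int_XfPg\,d\mu$ for all $f,g\in L^2(X,\mu)$. Write $(f,g)_\mu=\int_Xfg\,d\mu$, $1_A$ for the indicator of $A$, $\overline{S}=X\setminus S$. $h_P(k):=\inf\max_{1\leq i\leq k}\frac{(1_{S_i},P1_{\overline{S_i}})_\mu}{\mu(S_i)}$ over all collections of $k$ pairwise disjoint measurable sets with $\mu(S_i)>0$. $\overline{h}_P(k):=\sup\min_{1\leq i\leq k}\frac{2(1_{A_{2i-1}},P1_{A_{2i}})_\mu}{\mu(A_{2i-1}\cup A_{2i})}$ over all collections of $k$ pairs of measurable sets $(A_1,A_2),\ldots,(A_{2k-1},A_{2k})$, pairwise disjoint, with $\mu(A_{2i-1}\cup A_{2i})>0$ for each $i$. *)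

From HB Require Import structures.
From mathcomp Require Import all_boot all_order all_algebra.
From mathcomp Require Import all_classical all_reals all_analysis.
Set Implicit Arguments. Unset Strict Implicit. Unset Printing Implicit Defensive.
Import Order.TTheory GRing.Theory Num.Theory.
Import numFieldNormedType.Exports.
Local Open Scope classical_set_scope.
Local Open Scope ring_scope.

Section MarkovDefs.
Context {d : measure_display} {T : measurableType d} {R : realType}.
Variable mu : probability T R.

Definition L2 : {pred T -> R} := Lfun mu 2%:E.

Definition ip (f g : T -> R) : \bar R := (\int[mu]_x (f x * g x)%:E)%E.

Definition L2_infinite_dimensional : Prop :=
  forall n : nat, exists f : 'I_n -> T -> R,
    (forall i, f i \in L2) /\
    (forall c : 'I_n -> R,
        {ae mu, forall x, \sum_(i < n) c i * f i x = 0} -> forall i, c i = 0).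

(* P : L^2 -> L^2 given on representatives; it must be well defined on
   a.e.-classes, linear, P 1 = 1 and positivity preserving. *)
Definition markov_operator (P : (T -> R) -> (T -> R)) : Prop :=
  [/\ (forall f, f \in L2 -> P f \in L2),
      (forall f g, f \in L2 -> g \in L2 ->
         {ae mu, forall x, f x = g x} -> {ae mu, forall x, P f x = P g x}),
      (forall (a : R) f g, f \in L2 -> g \in L2 ->
         {ae mu, forall x, P (fun y => a * f y + g y) x = a * P f x + P g x}),
      {ae mu, forall x, P (cst 1) x = 1} &
      (forall f, f \in L2 -> {ae mu, forall x, 0 <= f x} ->
         {ae mu, forall x, 0 <= P f x})].

Definition reversible (P : (T -> R) -> (T -> R)) : Prop :=
  forall f g, f \in L2 -> g \in L2 -> ip g (P f) = ip f (P g).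

Definition expansion_ratio (P : (T -> R) -> (T -> R)) (S : set T) : R :=
  fine (ip \1_S (P \1_(~` S))) / fine (mu S).

Definition bipartite_ratio (P : (T -> R) -> (T -> R)) (A B : set T) : R :=
  2 * fine (ip \1_A (P \1_B)) / fine (mu (A `|` B)).

Definition hP (P : (T -> R) -> (T -> R)) (k : nat) : \bar R :=
  ereal_inf [set r : \bar R | exists S : 'I_k -> set T,
    [/\ (forall i, measurable (S i)),
        (forall i, (0 < mu (S i))%E),
        (forall i j, i != j -> S i `&` S j = set0) &
        r = \big[Order.max/-oo%E]_(i < k) (expansion_ratio P (S i))%:E]].

Definition hbarP (P : (T -> R) -> (T -> R)) (k : nat) : \bar R :=
  ereal_sup [set r : \bar R | exists A B : 'I_k -> set T,
    [/\ (forall i, measurable (A i) /\ measurable (B i)),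
        (forall i, (0 < mu (A i `|` B i))%E),
        (forall i j, A i `&` B j = set0),
        (forall i j, i != j -> A i `&` A j = set0 /\ B i `&` B j = set0) &
        r = \big[Order.min/+oo%E]_(i < k) (bipartite_ratio P (A i) (B i))%:E]].

End MarkovDefs.

(* Let (A_i, B_i) be pairs witnessing hbar_P(k).  The sets S_i = A_i ∪ B_i are
   disjoint, so they compete for h_P(k), and it suffices to show that for
   disjoint A, B with S = A ∪ B
     (1_S, P 1_{X\S}) / mu(S) + 2 (1_A, P 1_B) / mu(S) <= 1.
   Since P 1_{X\S} = 1 - P 1_A - P 1_B a.e. and (1_B, P 1_A) = (1_A, P 1_B) by
   reversibility, the left-hand side equals
   1 - ((1_A, P 1_A) + (1_B, P 1_B)) / mu(S), and positivity of P concludes. *)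

From HB Require Import structures.
From mathcomp Require Import all_boot all_order all_algebra.
From mathcomp Require Import all_classical all_reals all_analysis.
From mathcomp Require Import ring lra.
Import Order.TTheory GRing.Theory Num.Theory.
Local Open Scope classical_set_scope.
Local Open Scope ring_scope.

Lemma indicU_disjoint {T : Type} {R : pzRingType} {A B : set T} :
  A `&` B = set0 -> \1_(A `|` B) = \1_A \+ \1_B :> (T -> R).
Proof.
move=> AB0; apply/funext => x; rewrite /= !indicE in_setU.
case: (boolP (x \in A)) => [/set_mem xA|_]; last by rewrite add0r.
case: (boolP (x \in B)) => [/set_mem xB|_]; last by rewrite addr0.
by have : (A `&` B) x by []; rewrite AB0.
Qed.

Section inner_product.
Context {d : measure_display} {T : measurableType d} {R : realType}
  (mu : probability T R).

Lemma indic_L2 {A : set T} : measurable A -> \1_A \in L2 mu.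
Proof.
move=> mA; rewrite /L2 inE; apply/andP; split.
  by rewrite inE /=; exact: measurable_realfun.measurable_indic.
rewrite inE /= /finite_norm unlock /=; apply: poweR_lty.
have -> : (fun x => `|(EFin \o \1_A) x| `^ 2)%E =
          (fun x => (\1_A x)%:E :> \bar R).
  by apply/funext => x /=; rewrite indicE; case: (x \in A);
    rewrite ?normr1 ?normr0 ?powR1 ?powR0.
by rewrite integral_indic // setIT ltey_eq fin_num_measure.
Qed.

Lemma L1_measurable (f : T -> R) : f \in Lfun mu 1 -> measurable_fun setT f.
Proof. by move/sub_Lfun_mfun; rewrite inE. Qed.

Lemma L2D {f g : T -> R} : f \in L2 mu -> g \in L2 mu -> f \+ g \in L2 mu.
Proof. by apply: (Lfun_addr_closed mu _).2; rewrite lee_fin ler1n. Qed.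

Lemma expectation_ae_ge0 (X : T -> R) : measurable_fun setT X ->
  {ae mu, forall x, 0 <= X x} -> (0 <= 'E_mu[X])%E.
Proof.
move=> mX X0; rewrite unlock (ae_eq_integral (fun x => (Num.max (X x) 0)%:E)) //.
- by apply: integral_ge0 => x _; rewrite lee_fin le_max lexx orbT.
- exact/measurable_realfun.measurable_EFinP.
- apply/measurable_realfun.measurable_EFinP.
  exact: measurable_realfun.measurable_maxr.
- by apply: filterS X0 => x X0x _; rewrite max_l.
Qed.

Lemma ipE (f g : T -> R) : ip mu f g = ('E_mu[f \* g])%E.
Proof. by rewrite unlock. Qed.

Lemma ipC (f g : T -> R) : ip mu f g = ip mu g f.
Proof. by rewrite /ip; under eq_integral do rewrite mulrC. Qed.

Lemma ip_fin_num {f g : T -> R} : f \in L2 mu -> g \in L2 mu ->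
  ip mu f g \is a fin_num.
Proof. by move=> fL gL; rewrite ipE; exact/expectation_fin_num/Lfun2_mul_Lfun1. Qed.

Lemma fine_ipDr (f g h : T -> R) : f \in L2 mu -> g \in L2 mu -> h \in L2 mu ->
  fine (ip mu f (g \+ h)) = fine (ip mu f g) + fine (ip mu f h).
Proof.
move=> fL gL hL; rewrite -(fineD (ip_fin_num fL gL) (ip_fin_num fL hL)) !ipE.
have -> : f \* (g \+ h) = f \* g \+ f \* h by apply/funext => x /=; rewrite mulrDr.
by rewrite expectationD //; exact: Lfun2_mul_Lfun1.
Qed.

Lemma ip_ae_eqr (f g g' : T -> R) : f \in L2 mu -> g \in L2 mu -> g' \in L2 mu ->
  {ae mu, forall x, g x = g' x} -> ip mu f g = ip mu f g'.
Proof.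
move=> fL gL g'L gg'; apply: ae_eq_integral => //.
- by apply/measurable_realfun.measurable_EFinP/L1_measurable/Lfun2_mul_Lfun1.
- by apply/measurable_realfun.measurable_EFinP/L1_measurable/Lfun2_mul_Lfun1.
- by apply: filterS gg' => x ->.
Qed.

Lemma ip_indic_cst1 (A : set T) : measurable A -> ip mu \1_A (cst 1) = mu A.
Proof.
by move=> mA; rewrite ipE -expectation_indic //; congr expectation;
  apply/funext => x /=; rewrite mulr1.
Qed.

Lemma ip_ge0 (f g : T -> R) : f \in L2 mu -> g \in L2 mu ->
  {ae mu, forall x, 0 <= f x} -> {ae mu, forall x, 0 <= g x} -> (0 <= ip mu f g)%E.
Proof.
move=> fL gL f0 g0; rewrite ipE; apply: expectation_ae_ge0.
  exact/L1_measurable/Lfun2_mul_Lfun1.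
by apply: filterS2 f0 g0 => x; exact: mulr_ge0.
Qed.

End inner_product.

Section markov_operator.
Context {d : measure_display} {T : measurableType d} {R : realType}
  (mu : probability T R) (P : (T -> R) -> (T -> R)).
Hypothesis PM : markov_operator mu P.

Lemma markov_indic_L2 {A : set T} : measurable A -> P \1_A \in L2 mu.
Proof. by case: PM => PL2 _ _ _ _ /indic_L2/PL2. Qed.

Lemma markov_indicU {A B : set T} : measurable A -> measurable B ->
  A `&` B = set0 -> {ae mu, forall x, P \1_(A `|` B) x = P \1_A x + P \1_B x}.
Proof.
case: PM => _ _ Plin _ _ mA mB AB0.
have := Plin 1 _ _ (indic_L2 mu mA) (indic_L2 mu mB).
have -> : (fun y => 1 * \1_A y + \1_B y) = \1_(A `|` B) :> (T -> R).
  by rewrite (indicU_disjoint AB0); apply/funext => y; rewrite mul1r.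
by apply: filterS => x ->; rewrite mul1r.
Qed.

Lemma markov_indicC {A : set T} : measurable A ->
  {ae mu, forall x, P \1_A x + P \1_(~` A) x = 1}.
Proof.
move=> mA; case: PM => _ _ _ P1 _.
have := markov_indicU mA (measurableC mA) (setICr A).
by rewrite setUv indicT; apply: filterS2 P1 => x -> <-.
Qed.

Lemma ip_indic_markov_ge0 {A B : set T} : measurable A -> measurable B ->
  0 <= fine (ip mu \1_A (P \1_B)).
Proof.
case: PM => _ _ _ _ Ppos mA mB; apply/fine_ge0/ip_ge0.
- exact: indic_L2.
- exact: markov_indic_L2.
- by apply: aeW => x; rewrite indicE ler0n.
- by apply: Ppos; [exact: indic_L2 | apply: aeW => x; rewrite indicE ler0n].
Qed.

Lemma ip_indic_markov_compl (S : set T) : measurable S ->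
  fine (ip mu \1_S (P \1_(~` S))) = fine (mu S) - fine (ip mu \1_S (P \1_S)).
Proof.
move=> mS; have mSc := measurableC mS.
have iS := indic_L2 mu mS; have PS := markov_indic_L2 mS.
have PSc := markov_indic_L2 mSc.
rewrite -ip_indic_cst1 // (@ip_ae_eqr _ _ _ _ _ (cst 1) (P \1_S \+ P \1_(~` S))) //.
- by rewrite fine_ipDr // addrC addKr.
- exact: Lfun_cst.
- exact: L2D.
- by apply: filterS (markov_indicC mS) => x <-.
Qed.

Hypothesis PR : reversible mu P.

Lemma ip_indicU_markov (A B : set T) : measurable A -> measurable B ->
  A `&` B = set0 ->
  fine (ip mu \1_(A `|` B) (P \1_(A `|` B))) =
  fine (ip mu \1_A (P \1_A)) + 2 * fine (ip mu \1_A (P \1_B))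
  + fine (ip mu \1_B (P \1_B)).
Proof.
move=> mA mB AB0.
have iA := indic_L2 mu mA; have iB := indic_L2 mu mB.
have PA := markov_indic_L2 mA; have PB := markov_indic_L2 mB.
rewrite (@ip_ae_eqr _ _ _ _ _ (P \1_(A `|` B)) (P \1_A \+ P \1_B)); last 4 first.
- exact/indic_L2/measurableU.
- exact/markov_indic_L2/measurableU.
- exact: L2D.
- exact: markov_indicU.
have iAB := L2D mu iA iB.
rewrite (indicU_disjoint AB0) fine_ipDr // ![ip mu (_ \+ _) _]ipC.
rewrite !fine_ipDr // ![ip mu (P _) _]ipC (PR _ _ iA iB); ring.
Qed.

Lemma expansion_ratioU_add_bipartite_ratio_le1 (A B : set T) :
  measurable A -> measurable B -> A `&` B = set0 -> (0 < mu (A `|` B))%E ->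
  expansion_ratio mu P (A `|` B) + bipartite_ratio mu P A B <= 1.
Proof.
move=> mA mB AB0 muAB_gt0; have mAB := measurableU _ _ mA mB.
have fine_muAB_gt0 : 0 < fine (mu (A `|` B)).
  by apply: fine_gt0; rewrite muAB_gt0 ltey_eq fin_num_measure.
rewrite /expansion_ratio /bipartite_ratio ip_indic_markov_compl //.
rewrite ip_indicU_markov // -mulrDl ler_pdivrMr // mul1r.
have := ip_indic_markov_ge0 mA mA; have := ip_indic_markov_ge0 mB mB; lra.
Qed.

End markov_operator.

Section ereal_bounds.
Context {R : realType}.
Local Open Scope ereal_scope.

Lemma bigmax_add_bigmin_le (I : finType) (f g : I -> R) (c : R) :
  (forall i, (f i + g i <= c)%R) ->
  \big[Order.max/-oo]_i (f i)%:E + \big[Order.min/+oo]_i (g i)%:E <= c%:E.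
Proof.
move=> fgc; apply: (big_ind (fun x => x + _ <= c%:E)) => [|x y|i _].
- by rewrite addNye leNye.
- by rewrite /Order.max; case: ifP.
- apply: (@le_trans _ _ ((f i)%:E + (g i)%:E)); last by rewrite -EFinD lee_fin.
  by apply: leeD2l; exact: bigmin_le.
Qed.

Lemma ereal_inf_add_sup_le (S B : set \bar R) (c : R) :
  (forall r, B r -> exists2 h, S h & h + r <= c%:E) ->
  ereal_inf S + ereal_sup B <= c%:E.
Proof.
move=> SBc; have infS_le r : B r -> ereal_inf S + r <= c%:E.
  by move=> /SBc[h Sh]; apply: le_trans; apply/leeD2r/ereal_inf_lbound.
case: (ereal_inf S) infS_le => [s| |] infS_le; last by rewrite addNye leNye.
- rewrite -leeBrDl //; apply: ge_ereal_sup => r Br.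
  by rewrite leeBrDl //; exact: infS_le.
- suff -> : ereal_sup B = -oo by rewrite leNye.
  by apply/eqP; rewrite -leeNy_eq; apply: ge_ereal_sup => -[r| |] // /infS_le.
Qed.

End ereal_bounds.

Theorem proposition8p3 (d : measure_display) (T : measurableType d)
  (R : realType) (mu : probability T R) (P : (T -> R) -> (T -> R)) :
  L2_infinite_dimensional mu ->
  markov_operator mu P -> reversible mu P ->
  forall k : nat, (1 <= k)%N -> (hP mu P k + hbarP mu P k <= 1)%E.
Proof.
move=> _ PM PR k _; apply: ereal_inf_add_sup_le.
move=> _ [A [B [mAB muAB_gt0 AB_disj AA_BB_disj ->]]].
exists (\big[Order.max/-oo%E]_(i < k) (expansion_ratio mu P (A i `|` B i))%:E).
  exists (fun i => A i `|` B i); split => // [i|i j ij].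
  - by have [mA mB] := mAB i; exact: measurableU.
  - have [AA BB] := AA_BB_disj i j ij.
    rewrite setIUl !setIUr AA BB (AB_disj i j) setIC (AB_disj j i).
    by rewrite !setU0.
apply: bigmax_add_bigmin_le => i; have [mA mB] := mAB i.
exact: expansion_ratioU_add_bipartite_ratio_le1.
Qed.
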